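(* Let $\mathcal{H}$ be a reproducing kernel Hilbert space of functions on a set $X$, with multiplier algebra $\mathcal{M}(\mathcal{H})$. Let $(\phi_n)_{n\ge1}$ be a sequence of elements of the closed unit ball of $\mathcal{M}(\mathcal{H})$. Put $\Phi_0=1$ and $\Phi_n:=\phi_1\phi_2\cdots\phi_n$ for $n\ge1$. Assume there is a multiplier $\Phi\in\mathcal{M}(\mathcal{H})$ such that $\lim_{n\to\infty}\Phi_n(x)=\Phi(x)$ for every $x\in X$. Then for every $f\in\mathcal{H}$, \[ f=\Phi\, M_\Phi^{*}f+\sum_{n=1}^{\infty}\Phi_{n-1}\cdot Q_{\phi_n}M_{\Phi_{n-1}}^{*}f, \] where the series converges in the norm of $\mathcal{H}$.
   Context: For a multiplier $\phi\in\mathcal{M}(\mathcal{H})$, $M_\phi:\mathcal{H}\to\mathcal{H}$ denotes the multiplication operator $M_\phi g=\phi g$, and $M_\phi^*$ its Hilbert space adjoint. The multiplier norm of $\phi$ is the operator norm of $M_\phi$; the closed unit ball of $\mathcal{M}(\mathcal{H})$ consists of the multipliers with $\|M_\phi\|\le 1$. For $\phi\in\mathcal{M}(\mathcal{H})$ define $P_\phi:=M_\phi M_\phi^*$ and $Q_\phi:=I-M_\phi M_\phi^*$, where $I$ is the identity on $\mathcal{H}$. *)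

From HB Require Import structures.
From mathcomp Require Import all_boot all_order all_algebra.
From mathcomp Require Import all_classical all_reals all_analysis.
From mathcomp.real_closed Require Import complex.
Set Implicit Arguments. Unset Strict Implicit. Unset Printing Implicit Defensive.
Import Order.TTheory GRing.Theory Num.Theory.
Import numFieldNormedType.Exports.
Local Open Scope classical_set_scope.
Local Open Scope ring_scope.

Section RKHS.
Variables (R : realType) (X : Type).
Local Notation C := R[i].
Local Notation fn := (X -> C).

Definition cabs (z : C) : R := ComplexField.Normc.normc z.

Definition fadd (f g : fn) : fn := fun x => f x + g x.
Definition fsub (f g : fn) : fn := fun x => f x - g x.
Definition fscale (a : C) (f : fn) : fn := fun x => a * f x.
Definition fzero : fn := fun _ => 0.

Definition hnorm (ip : fn -> fn -> C) (f : fn) : R := Num.sqrt (complex.Re (ip f f)).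

(* H is a reproducing kernel Hilbert space of functions on X with inner
   product ip (linear in the first variable): a complex inner product space
   of functions, complete for the induced norm, with bounded point
   evaluations (equivalently, having a reproducing kernel). *)
Record is_RKHS (H : set fn) (ip : fn -> fn -> C) : Prop := {
  rkhs0 : H fzero;
  rkhsD : forall f g, H f -> H g -> H (fadd f g);
  rkhsZ : forall a f, H f -> H (fscale a f);
  ipD : forall f g h, H f -> H g -> H h -> ip (fadd f g) h = ip f h + ip g h;
  ipZ : forall a f g, H f -> H g -> ip (fscale a f) g = a * ip f g;
  ipC : forall f g, H f -> H g -> ip g f = (ip f g)^*;
  ip_ge0 : forall f, H f -> 0 <= ip f f;
  ip_eq0 : forall f, H f -> ip f f = 0 -> f = fzero;
  rkhs_complete : forall u : nat -> fn, (forall n, H (u n)) ->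
    (forall e : R, 0 < e -> exists N, forall m n, (N <= m)%N -> (N <= n)%N ->
        hnorm ip (fsub (u m) (u n)) < e) ->
    exists g, H g /\ (fun n => hnorm ip (fsub (u n) g)) @ \oo --> (0 : R);
  rkhs_eval : forall x : X, exists c : R, forall f, H f ->
    cabs (f x) <= c * hnorm ip f
}.

Definition Mop (phi : fn) : fn -> fn := fun g x => phi x * g x.

Definition multiplier (H : set fn) (phi : fn) : Prop :=
  forall g, H g -> H (Mop phi g).

Definition mult_ball (H : set fn) (ip : fn -> fn -> C) (phi : fn) : Prop :=
  multiplier H phi /\ forall g, H g -> hnorm ip (Mop phi g) <= hnorm ip g.

Definition is_adjoint (H : set fn) (ip : fn -> fn -> C) (A B : fn -> fn) : Prop :=
  (forall g, H g -> H (B g)) /\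
  forall f g, H f -> H g -> ip (A f) g = ip f (B g).

Definition Phi_prod (phi : nat -> fn) (n : nat) : fn :=
  fun x => \prod_(1 <= k < n.+1) phi k x.

Definition Qop (phi : fn) (Mstar : fn -> fn) : fn -> fn :=
  fun g => fsub g (Mop phi (Mstar g)).

End RKHS.

(* Write a_n := M_{Phi_n}^* f and P_n f := Phi_n a_n.  Since Phi_{n+k} = Phi_n psi with psi the
   contractive multiplier phi_{n+1} ... phi_{n+k}, we get a_{n+k} = M_psi^* a_n and
   P_n f - P_{n+k} f = M_{Phi_n} Q_psi a_n, whence
   ||P_n f - P_{n+k} f||^2 <= ||a_n||^2 - ||a_{n+k}||^2.
   So ||a_n|| decreases and (P_n f) is Cauchy.  Its limit is identified through reproducing
   kernels: M_psi^* k_y = conj(psi y) k_y, so P_n k_y -> Phi M_Phi^* k_y pointwise, and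
   (P_n f)(y) = <f, P_n k_y>.  The partial sums of the series telescope to f - P_N f.
   The kernels are not given with the space; k_y is obtained from the nearest point of
   h/h(y) in the closed subspace {g | g y = 0}. *)
From HB Require Import structures.
From mathcomp Require Import all_boot all_order all_algebra.
From mathcomp Require Import all_classical all_reals all_analysis.
From mathcomp.real_closed Require Import complex.
From mathcomp Require Import ring lra.
Set Implicit Arguments. Unset Strict Implicit. Unset Printing Implicit Defensive.
Import Order.TTheory GRing.Theory Num.Theory.
Import numFieldNormedType.Exports.
Local Notation Re := complex.Re.
Local Open Scope classical_set_scope.
Local Open Scope complex_scope.
Local Open Scope ring_scope.

Section ComplexModulus.
Variable R : realType.
Local Notation C := R[i].

Lemma ReJ (x : C) : Re x^* = Re x. Proof. by case: x. Qed.

(* [conjc_real], stated over an [rcfType], is not found by [rewrite] at a [realType] *)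
Lemma conjcR (r : R) : (r%:C : C)^* = r%:C. Proof. exact: conjc_real. Qed.

Lemma cabs_ge0 (x : C) : 0 <= cabs x.
Proof. by case: x => a b; apply: sqrtr_ge0. Qed.

Lemma cabsM (x y : C) : cabs (x * y) = cabs x * cabs y.
Proof. exact: ComplexField.Normc.normcM. Qed.

Lemma cabsD (x y : C) : cabs (x + y) <= cabs x + cabs y.
Proof. exact: le_normcD. Qed.

Lemma cabsN (x : C) : cabs (- x) = cabs x.
Proof. exact: normcN. Qed.

Lemma cabsJ (x : C) : cabs x^* = cabs x.
Proof. by case: x => a b; rewrite /cabs /= sqrrN. Qed.

Lemma cabs_eq0 (x : C) : cabs x = 0 -> x = 0.
Proof. exact: ComplexField.Normc.eq0_normc. Qed.

Lemma cabsR (r : R) : cabs r%:C = `|r|.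
Proof. by rewrite /cabs /= expr0n addr0 sqrtr_sqr. Qed.

Lemma cabs0 : cabs (0 : C) = 0.
Proof. by rewrite -(rmorph0 (real_complex R)) cabsR normr0. Qed.

Lemma cabs1 : cabs (1 : C) = 1.
Proof. exact: ComplexField.Normc.normc1. Qed.

Lemma cabs_distC (x y : C) : cabs (x - y) = cabs (y - x).
Proof. by rewrite -cabsN opprB. Qed.

Lemma cabs_distD (x y z : C) : cabs (x - z) <= cabs (x - y) + cabs (y - z).
Proof. by rewrite -[x - z](subrKA y); apply: cabsD. Qed.

Lemma Re_le_cabs (x : C) : Re x <= cabs x.
Proof.
case: x => a b; rewrite /cabs /=; apply: le_trans (ler_norm a) _.
by rewrite -(sqrtr_sqr a) ler_sqrt ?addr_ge0 ?sqr_ge0 // lerDl sqr_ge0.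
Qed.

Lemma mulcJ (x : C) : x * x^* = (cabs x ^+ 2)%:C.
Proof.
case: x => a b; rewrite /cabs /= sqr_sqrtr ?addr_ge0 ?sqr_ge0 //.
apply/eqP; rewrite eq_complex /= mulrN opprK !expr2 eqxx /=.
by rewrite mulrN mulrC addNr.
Qed.

Lemma ge0_complexE (z : C) : 0 <= z -> z = (Re z)%:C /\ 0 <= Re z.
Proof. by case: z => a b; rewrite lecE /= => /andP[/eqP -> h]. Qed.

End ComplexModulus.

Section ComplexLimits.
Variable R : realType.
Local Notation C := R[i].

Definition ccvg (u : nat -> C) (l : C) := forall e : R, 0 < e ->
  exists N, forall n, (N <= n)%N -> cabs (u n - l) < e.

Lemma ccvg_unique u a b : ccvg u a -> ccvg u b -> a = b.
Proof.
move=> ha hb; apply/eqP; rewrite -subr_eq0; apply/eqP/cabs_eq0.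
apply/eqP; rewrite eq_le cabs_ge0 andbT; apply/ler_addgt0Pr => e e0.
have e2 : 0 < e / 2 by rewrite divr_gt0.
have [N1 h1] := ha _ e2; have [N2 h2] := hb _ e2.
have p := h1 _ (leq_maxl N1 N2); have q := h2 _ (leq_maxr N1 N2).
rewrite cabs_distC in p; have := cabs_distD a (u (maxn N1 N2)) b; lra.
Qed.

Lemma ccvg_cst (c : C) : ccvg (fun=> c) c.
Proof. by move=> e e0; exists 0%N => n _; rewrite subrr cabs0. Qed.

Lemma ccvgJ u a : ccvg u a -> ccvg (fun n => (u n)^*) a^*.
Proof.
move=> h e /h[N hN]; exists N => n /hN.
by rewrite -rmorphB cabsJ.
Qed.

Lemma ccvgM u v a b : ccvg u a -> ccvg v b -> ccvg (fun n => u n * v n) (a * b).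
Proof.
move=> ha hb e e0.
have b1 : 0 < cabs b + 1 by have := cabs_ge0 b; lra.
have a1 : 0 < cabs a + 1 by have := cabs_ge0 a; lra.
have [N1 h1] := ha _ (divr_gt0 (divr_gt0 e0 (ltr0Sn _ 1)) b1).
have e2 : 0 < Num.min 1 (e / 2 / (cabs a + 1)) by rewrite lt_min ltr01 !divr_gt0.
have [N2 h2] := hb _ e2.
exists (maxn N1 N2) => n; rewrite geq_max => /andP[/h1 p /h2].
rewrite lt_min => /andP[q1 q2].
have -> : u n * v n - a * b = (u n - a) * v n + a * (v n - b) by ring.
apply: le_lt_trans (cabsD _ _) _; rewrite !cabsM.
have vb : cabs (v n) <= cabs b + 1.
  by have := cabs_distD (v n) b 0; rewrite !subr0; lra.
have t1 : cabs (u n - a) * cabs (v n) <= cabs (u n - a) * (cabs b + 1).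
  by rewrite ler_wpM2l ?cabs_ge0.
have t2 : cabs a * cabs (v n - b) <= cabs (v n - b) * (cabs a + 1).
  by rewrite mulrC ler_wpM2l ?cabs_ge0 //; lra.
rewrite ltr_pdivlMr // in p; rewrite ltr_pdivlMr // in q2; lra.
Qed.

End ComplexLimits.

Section RealApproximation.
Variable R : realType.

Lemma eventually_invSn_lt (e : R) : 0 < e ->
  exists N, forall n, (N <= n)%N -> n.+1%:R^-1 < e.
Proof.
move=> e0; exists (Num.bound e^-1) => n hn.
have ei : 0 < e^-1 by rewrite invr_gt0.
have h : e^-1 < n.+1%:R.
  by apply: lt_le_trans (archi_boundP (ltW ei)) _; rewrite ler_nat ltnW.
by rewrite -[e]invrK ltf_pV2 ?posrE ?ltr0n.
Qed.

Lemma le_of_sqrD_approx (z d : R) : 0 <= d ->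
  (forall e, 0 < e -> e <= 1 -> exists a b, [/\ 0 <= a, 0 <= b,
      z <= (a + b) ^+ 2, a ^+ 2 <= d + e & b <= e]) -> z <= d.
Proof.
move=> d0 h; apply/ler_addgt0Pr => e' e'0.
have k0 : 0 < 2 * d + 6 by lra.
set e := Num.min 1 (e' / (2 * d + 6)).
have e0 : 0 < e by rewrite lt_min ltr01 divr_gt0.
have e1 : e <= 1 by rewrite ge_min lexx.
have e3 : e * (2 * d + 6) <= e' by rewrite -ler_pdivlMr // ge_min lexx orbT.
have [a [b [a0 b0 hz ha hb]]] := h e e0 e1.
have a2 : a <= d + 2 by nra.
have : (a + b) ^+ 2 = a ^+ 2 + 2 * a * b + b ^+ 2 by ring.
nra.
Qed.

End RealApproximation.

Section InnerProductSpace.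
Variables (R : realType) (X : Type) (H : set (X -> R[i])).
Variable ip : (X -> R[i]) -> (X -> R[i]) -> R[i].
Hypothesis hH : is_RKHS H ip.
Local Notation C := R[i].
Local Notation V := (X -> R[i]).
Local Notation hn := (hnorm ip).
Local Notation f0 := (@fzero R X).

Definition nsq (f : V) : R := Re (ip f f).

Lemma fsubE (f g : V) : fsub f g = fadd f (fscale (-1) g).
Proof. by apply: funext => x; rewrite /fsub /fadd /fscale mulN1r. Qed.

Lemma H0 : H f0. Proof. exact: (rkhs0 hH). Qed.
Lemma HD f g : H f -> H g -> H (fadd f g). Proof. exact: (rkhsD hH). Qed.
Lemma HZ a f : H f -> H (fscale a f). Proof. exact: (rkhsZ hH). Qed.
Lemma HB f g : H f -> H g -> H (fsub f g).
Proof. by move=> hf hg; rewrite fsubE; apply/HD/HZ. Qed.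
#[local] Hint Resolve H0 HD HZ HB : core.

Lemma ipBl f g h : H f -> H g -> H h -> ip (fsub f g) h = ip f h - ip g h.
Proof.
move=> hf hg hh; have hZ : H (fscale (-1) g) by apply: HZ.
by rewrite fsubE (ipD hH) // (ipZ hH) // mulN1r.
Qed.

Lemma ipDr f g h : H f -> H g -> H h -> ip f (fadd g h) = ip f g + ip f h.
Proof.
move=> hf hg hh; have hD : H (fadd g h) by apply: HD.
by rewrite (ipC hH) // (ipD hH) // rmorphD /= -!(ipC hH).
Qed.

Lemma ipZr a f g : H f -> H g -> ip f (fscale a g) = a^* * ip f g.
Proof.
move=> hf hg; have hZ : H (fscale a g) by apply: HZ.
by rewrite (ipC hH) // (ipZ hH) // rmorphM /= -(ipC hH).
Qed.

Lemma ipBr f g h : H f -> H g -> H h -> ip f (fsub g h) = ip f g - ip f h.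
Proof.
move=> hf hg hh; have hZ : H (fscale (-1) h) by apply: HZ.
by rewrite fsubE ipDr // ipZr // rmorphN rmorph1 mulN1r.
Qed.

Lemma ip0r f : H f -> ip f f0 = 0.
Proof.
move=> hf; have -> : f0 = fscale 0 f0 by apply: funext => x; rewrite /fscale mul0r.
by rewrite ipZr ?rmorph0 ?mul0r.
Qed.

Lemma ip_self f : H f -> ip f f = (nsq f)%:C.
Proof. by move=> hf; case: (ge0_complexE (ip_ge0 hH hf)). Qed.

Lemma nsq_ge0 f : H f -> 0 <= nsq f.
Proof. by move=> hf; case: (ge0_complexE (ip_ge0 hH hf)). Qed.

Lemma nsq_eq0 f : H f -> nsq f = 0 -> f = f0.
Proof. by move=> hf h0; apply: (ip_eq0 hH) => //; rewrite ip_self // h0. Qed.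

Lemma hnorm_ge0 f : 0 <= hn f. Proof. exact: sqrtr_ge0. Qed.

Lemma sqr_hnorm f : H f -> hn f ^+ 2 = nsq f.
Proof. by move=> hf; rewrite sqr_sqrtr ?nsq_ge0. Qed.

Lemma hnorm_le f e : 0 <= e -> nsq f <= e ^+ 2 -> hn f <= e.
Proof. by move=> e0 h; rewrite -(ger0_norm e0) -sqrtr_sqr ler_sqrt ?sqr_ge0. Qed.

Lemma hnorm_lt f e : 0 < e -> nsq f < e ^+ 2 -> hn f < e.
Proof. by move=> e0 h; rewrite -(gtr0_norm e0) -sqrtr_sqr ltr_sqrt ?exprn_gt0. Qed.

Lemma nsqBZ u v t : H u -> H v ->
  nsq (fsub u (fscale t v)) = nsq u - 2 * Re (t^* * ip u v) + cabs t ^+ 2 * nsq v.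
Proof.
move=> hu hv; rewrite /nsq ipBl ?ipBr ?(ipZ hH) ?ipZr //; auto.
rewrite (ipC hH hu hv) (ip_self hv) mulrA mulcJ.
have -> : t * (ip u v)^* = (t^* * ip u v)^* by rewrite rmorphM /= conjCK.
by rewrite -rmorphM /= !raddfB /= ReJ; lra.
Qed.

Lemma nsqB u v : H u -> H v -> nsq (fsub u v) = nsq u - 2 * Re (ip u v) + nsq v.
Proof.
move=> hu hv; have v1 : fscale 1 v = v by apply: funext => x; rewrite /fscale mul1r.
by have := nsqBZ 1 hu hv; rewrite v1 rmorph1 mul1r cabs1 expr1n mul1r.
Qed.

Lemma nsqD u v : H u -> H v -> nsq (fadd u v) = nsq u + 2 * Re (ip u v) + nsq v.
Proof.
move=> hu hv; have -> : fadd u v = fsub u (fscale (-1) v).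
  by apply: funext => x; rewrite /fadd /fsub /fscale mulN1r opprK.
by rewrite nsqBZ // rmorphN rmorph1 mulN1r raddfN cabsN cabs1 expr1n mul1r; lra.
Qed.

Lemma nsqZ a f : H f -> nsq (fscale a f) = cabs a ^+ 2 * nsq f.
Proof. by move=> hf; rewrite /nsq (ipZ hH) ?ipZr ?ip_self ?mulrA ?mulcJ -?rmorphM; auto. Qed.

Lemma nsq_distC u v : H u -> H v -> nsq (fsub u v) = nsq (fsub v u).
Proof.
move=> hu hv; have -> : fsub v u = fscale (-1) (fsub u v).
  by apply: funext => x; rewrite /fsub /fscale mulN1r opprB.
by rewrite nsqZ ?cabsN ?cabs1 ?expr1n ?mul1r; auto.
Qed.

Lemma parallelogram u v : H u -> H v ->
  nsq (fadd u v) + nsq (fsub u v) = 2 * nsq u + 2 * nsq v.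
Proof. by move=> hu hv; rewrite nsqD // nsqB //; lra. Qed.

Lemma cauchy_schwarz u v : H u -> H v -> cabs (ip u v) <= hn u * hn v.
Proof.
move=> hu hv; have [v0|v_neq0] := eqVneq (nsq v) 0.
  by rewrite (nsq_eq0 hv v0) ip0r // cabs0 mulr_ge0 ?hnorm_ge0.
have vp : 0 < nsq v by rewrite lt_def v_neq0 nsq_ge0.
set c := ip u v; set b := nsq v.
(* expand 0 <= ||u - (c / b) v||^2 *)
have := nsq_ge0 (HB hu (HZ (c * b^-1%:C) hv)).
rewrite nsqBZ // rmorphM /= conjcR -/c mulrAC [c^* * c]mulrC mulcJ -rmorphM /=.
have bi : 0 < b^-1 by rewrite invr_gt0.
rewrite cabsM cabsR (gtr0_norm bi) => h.
have e : (cabs c * b^-1) ^+ 2 * b = cabs c ^+ 2 / b.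
  by rewrite exprMn expr2 -!mulrA mulVf ?mulr1.
have h2 : cabs c ^+ 2 <= nsq u * b by rewrite -ler_pdivrMr //; lra.
rewrite -sqrtrM ?nsq_ge0 // -(ger0_norm (cabs_ge0 c)) -sqrtr_sqr ler_sqrt //.
by rewrite mulr_ge0 ?nsq_ge0.
Qed.

Lemma hnormD u v : H u -> H v -> hn (fadd u v) <= hn u + hn v.
Proof.
move=> hu hv; apply: hnorm_le; first by rewrite addr_ge0 ?hnorm_ge0.
rewrite nsqD // -(sqr_hnorm hu) -(sqr_hnorm hv).
have := le_trans (Re_le_cabs _) (cauchy_schwarz hu hv); lra.
Qed.

Lemma hnorm_distD u v w : H u -> H v -> H w ->
  hn (fsub u w) <= hn (fsub u v) + hn (fsub v w).
Proof.
move=> hu hv hw; have -> : fsub u w = fadd (fsub u v) (fsub v w).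
  by apply: funext => x; rewrite /fsub /fadd subrKA.
by apply: hnormD; auto.
Qed.


Definition hcvg (u : nat -> V) (L : V) := forall e, 0 < e ->
  exists N, forall n, (N <= n)%N -> hn (fsub (u n) L) < e.

Lemma hcvgP u L : hcvg u L <-> (fun n => hn (fsub (u n) L)) @ \oo --> (0 : R).
Proof.
split=> [h|/cvgrPdist_lt h e /h[N _ hN]].
- apply/cvgrPdist_lt => e /h[N hN]; exists N => // n /hN.
  by rewrite /= sub0r normrN ger0_norm ?hnorm_ge0.
- by exists N => n /hN; rewrite /= sub0r normrN ger0_norm ?hnorm_ge0.
Qed.

Lemma hcvg_cauchy (u : nat -> V) : (forall n, H (u n)) ->
  (forall e, 0 < e -> exists N, forall m n, (N <= m)%N -> (N <= n)%N ->
     hn (fsub (u m) (u n)) < e) ->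
  exists L, H L /\ hcvg u L.
Proof.
by move=> hu /(rkhs_complete hH hu)[L [hL /hcvgP cL]]; exists L.
Qed.

Lemma eval_bounded x : exists c, 0 < c /\ forall f, H f -> cabs (f x) <= c * hn f.
Proof.
have [c hc] := rkhs_eval hH x; exists (`|c| + 1); split.
  by have := normr_ge0 c; lra.
move=> f hf; apply: le_trans (hc f hf) _; rewrite ler_wpM2r ?hnorm_ge0 //.
by have := ler_norm c; lra.
Qed.

Lemma hcvg_eval (u : nat -> V) L x : (forall n, H (u n)) -> H L ->
  hcvg u L -> ccvg (fun n => u n x) (L x).
Proof.
move=> hu hL h e e0; have [c [c0 hc]] := eval_bounded x.
have [N hN] := h (e / c) (divr_gt0 e0 c0); exists N => n /hN hn.
apply: le_lt_trans (hc _ (HB (hu n) hL)) _.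
by rewrite mulrC -ltr_pdivlMr.
Qed.

Lemma hcvg_eq_pointwise (u : nat -> V) L G : (forall n, H (u n)) -> H L ->
  hcvg u L -> (forall x, ccvg (fun n => u n x) (G x)) -> L = G.
Proof.
by move=> hu hL cL cG; apply: funext => x; apply: ccvg_unique (hcvg_eval x hu hL cL) (cG x).
Qed.

Lemma hcvg_ipr f (u : nat -> V) L : H f -> (forall n, H (u n)) -> H L ->
  hcvg u L -> ccvg (fun n => ip f (u n)) (ip f L).
Proof.
move=> hf hu hL h e e0.
have c0 : 0 < hn f + 1 by have := hnorm_ge0 f; lra.
have [N hN] := h (e / (hn f + 1)) (divr_gt0 e0 c0); exists N => n /hN.
rewrite ltr_pdivlMr // -ipBr // => hlt.
apply: le_lt_trans (cauchy_schwarz hf (HB (hu n) hL)) (le_lt_trans _ hlt).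
by rewrite mulrC ler_wpM2l ?hnorm_ge0 //; lra.
Qed.

Lemma apollonius v a b : H v -> H a -> H b ->
  nsq (fsub a b) = 2 * nsq (fsub v a) + 2 * nsq (fsub v b)
                   - 4 * nsq (fsub v (fscale 2^-1 (fadd a b))).
Proof.
move=> hv ha hb.
have := parallelogram (HB hv hb) (HB hv ha).
have -> : fsub (fsub v b) (fsub v a) = fsub a b.
  by apply: funext => x; rewrite /fsub; ring.
have -> : fadd (fsub v b) (fsub v a) = fscale 2 (fsub v (fscale 2^-1 (fadd a b))).
  apply: funext => x; rewrite /fsub /fadd /fscale.
  by field.
rewrite nsqZ; last by apply/HB/HZ/HD.
have -> : cabs (2 : C) = 2 by rewrite -(rmorph_nat (real_complex R)) cabsR ger0_norm.
lra.
Qed.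

Section NearestPoint.
Variable S : set V.
Hypothesis SH : S `<=` H.
Hypothesis S0 : S f0.
Hypothesis SD : forall f g, S f -> S g -> S (fadd f g).
Hypothesis SZ : forall a f, S f -> S (fscale a f).
Hypothesis S_closed : forall u L, (forall n, S (u n)) -> H L -> hcvg u L -> S L.

Lemma exists_nearest v : H v ->
  exists2 m, S m & forall n, S n -> nsq (fsub v m) <= nsq (fsub v n).
Proof.
move=> hv.
pose D := [set r : R | exists2 n, S n & r = nsq (fsub v n)].
have D_ge0 : lbound D 0 by move=> r [n /SH hn ->]; apply/nsq_ge0/HB.
have D_neq0 : D !=set0 by exists (nsq (fsub v f0)); exists f0.
have hinf : has_inf D by split; last exists 0.
set d := inf D.
have d_le n : S n -> d <= nsq (fsub v n) by move=> Sn; apply: (ge_inf hinf.2); exists n.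
have d0 : 0 <= d by apply: lb_le_inf.
pose w (j : nat) : R := j.+1%:R^-1.
have approx j : exists n, S n /\ nsq (fsub v n) < d + w j.
  have wj : 0 < w j by rewrite invr_gt0 ltr0Sn.
  by have [r [n Sn ->] hr] := inf_adherent wj hinf; exists n.
have [ns hns] := choice approx.
have Sns j : S (ns j) by case: (hns j).
have hns_H j : H (ns j) by apply/SH.
have ns_cauchy i j : nsq (fsub (ns i) (ns j)) <= 2 * w i + 2 * w j.
  rewrite (apollonius hv (hns_H i) (hns_H j)).
  have := d_le _ (SZ 2^-1 (SD (Sns i) (Sns j))).
  have := (hns i).2; have := (hns j).2. lra.
have [m [hm cm]] : exists m, H m /\ hcvg ns m.
  apply: hcvg_cauchy => // e e0.
  have e4 : 0 < e ^+ 2 / 4 by rewrite divr_gt0 ?exprn_gt0.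
  have [N hN] := eventually_invSn_lt e4.
  exists N => i j /hN wi /hN wj; apply: hnorm_lt => //.
  have : w i < e ^+ 2 / 4 := wi; have : w j < e ^+ 2 / 4 := wj.
  by have := ns_cauchy i j; lra.
exists m; first exact: S_closed cm.
suff vm_le : nsq (fsub v m) <= d by move=> n /d_le; apply: le_trans.
apply: le_of_sqrD_approx => // e e0 e1.
have [N1 h1] := eventually_invSn_lt e0; have [N2 h2] := cm e e0.
set j := maxn N1 N2.
exists (hn (fsub v (ns j))), (hn (fsub (ns j) m)); split; rewrite ?hnorm_ge0 //.
- have := hnorm_distD hv (hns_H j) hm; rewrite -(sqr_hnorm (HB hv hm)).
  by have := hnorm_ge0 (fsub v m); nra.
- rewrite sqr_hnorm; last exact: HB.
  have : w j < e := h1 j (leq_maxl _ _).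
  by have := (hns j).2; lra.
- exact/ltW/h2/leq_maxr.
Qed.

Lemma nearest_orthogonal v m : H v -> S m ->
  (forall n, S n -> nsq (fsub v m) <= nsq (fsub v n)) ->
  forall n, S n -> ip (fsub v m) n = 0.
Proof.
move=> hv Sm m_min n Sn; have hm := SH Sm; have hn := SH Sn.
set z := fsub v m; set c := ip z n.
have np : 0 < nsq n + 1 by have := nsq_ge0 hn; lra.
set eps := (nsq n + 1)^-1.
have ep : 0 < eps by rewrite invr_gt0.
have en : eps * nsq n <= 1 by rewrite mulrC ler_pdivrMr // mul1r lerDl.
(* compare with the competitor m + eps c n *)
have := m_min _ (SD Sm (SZ (eps%:C * c) Sn)).
have -> : fsub v (fadd m (fscale (eps%:C * c) n)) = fsub z (fscale (eps%:C * c) n).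
  by apply: funext => x; rewrite /z /fsub /fadd opprD addrA.
have hz : H z by apply: HB.
rewrite nsqBZ // rmorphM /= conjcR -mulrA [c^* * c]mulrC mulcJ -rmorphM /=.
rewrite cabsM cabsR (gtr0_norm ep) => h.
have k2 : cabs c ^+ 2 <= 0.
  have e1 : (eps * cabs c) ^+ 2 * nsq n = eps * (eps * nsq n) * cabs c ^+ 2 by ring.
  have e2 : eps * (eps * nsq n) * cabs c ^+ 2 <= eps * cabs c ^+ 2.
    by rewrite -mulrA ler_pM2l // -[leRHS]mul1r ler_wpM2r ?sqr_ge0.
  rewrite leNgt; apply/negP => c_pos.
  have := mulr_gt0 ep c_pos; lra.
by apply: cabs_eq0; apply/eqP; rewrite -sqrf_eq0 eq_le k2 sqr_ge0.
Qed.

End NearestPoint.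

Lemma exists_kernel y : exists2 k, H k & forall g, H g -> g y = ip g k.
Proof.
have [[h [hh hy]]|no_h] := pselect (exists h, H h /\ h y != 0); last first.
  exists f0 => // g hg; rewrite ip0r //; apply/eqP/negPn/negP => gy.
  by apply: no_h; exists g.
pose S := [set g | H g /\ g y = 0].
have SH : S `<=` H by move=> g [].
have S0 : S f0 by [].
have SD f g : S f -> S g -> S (fadd f g).
  by move=> [hf fy] [hg gy]; split; [apply: HD|rewrite /fadd fy gy addr0].
have SZ a f : S f -> S (fscale a f).
  by move=> [hf fy]; split; [apply: HZ|rewrite /fscale fy mulr0].
have S_closed u L : (forall n, S (u n)) -> H L -> hcvg u L -> S L.
  move=> Su hL cL; split => //.
  have cy := hcvg_eval y (fun n => (Su n).1) hL cL.
  have u_y : (fun n => u n y) = fun=> 0 by apply: funext => n; case: (Su n).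
  by rewrite u_y in cy; apply: ccvg_unique cy (ccvg_cst 0).
pose h1 := fscale (h y)^-1 h.
have hh1 : H h1 by apply: HZ.
have [m Sm m_min] := exists_nearest SH S0 SD SZ S_closed hh1.
pose z := fsub h1 m.
have hz : H z by apply/HB/SH.
have z_orth : forall n, S n -> ip z n = 0 := nearest_orthogonal SH SD SZ hh1 Sm m_min.
have zy : z y = 1 by rewrite /z /fsub /h1 /fscale mulVf // Sm.2 subr0.
have z_pos : 0 < nsq z.
  rewrite lt_def nsq_ge0 // andbT; apply/eqP => /(nsq_eq0 hz)/(congr1 (fun f => f y)).
  by rewrite zy => /eqP; rewrite oner_eq0.
have hk : H (fscale (nsq z)^-1%:C z) by apply: HZ.
exists (fscale (nsq z)^-1%:C z) => // g hg.
(* g - g(y) z vanishes at y, hence is orthogonal to z *)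
have /z_orth : S (fsub g (fscale (g y) z)).
  by split; [apply/HB/HZ|rewrite /fsub /fscale zy mulr1 subrr].
have hZ : H (fscale (g y) z) by apply: HZ.
rewrite ipBr // ipZr // ip_self // => /eqP; rewrite subr_eq0 => /eqP zg.
rewrite (ipC hH hk hg) (ipZ hH) // zg mulrCA -rmorphM /= mulVf ?gt_eqF //.
by rewrite rmorph1 mulr1 conjCK.
Qed.

Lemma fsub_eq0 (f g : V) : fsub f g = f0 -> f = g.
Proof.
by move=> e; apply: funext => x; apply/eqP; rewrite -subr_eq0; apply/eqP/(congr1 (@^~ x) e).
Qed.

Lemma adjoint_unique A B1 B2 : is_adjoint H ip A B1 -> is_adjoint H ip A B2 ->
  forall g, H g -> B1 g = B2 g.
Proof.
move=> [hB1 a1] [hB2 a2] g hg; have hb1 := hB1 _ hg; have hb2 := hB2 _ hg.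
have hd : H (fsub (B1 g) (B2 g)) by apply: HB.
apply/fsub_eq0/(ip_eq0 hH hd).
by rewrite ipBr // -a1 // -a2 // subrr.
Qed.

Lemma adjoint_comp A1 B1 A2 B2 : is_adjoint H ip A1 B1 -> is_adjoint H ip A2 B2 ->
  (forall f, H f -> H (A2 f)) ->
  is_adjoint H ip (fun f => A1 (A2 f)) (fun g => B2 (B1 g)).
Proof.
move=> [hB1 a1] [hB2 a2] hA2; split=> [g /hB1/hB2 //|f g hf hg].
have hAf := hA2 _ hf; have hBg := hB1 _ hg.
by rewrite a1 // a2.
Qed.

Lemma MopM (a b : V) : Mop (fun x => a x * b x) = fun g => Mop a (Mop b g).
Proof. by apply: funext => g; apply: funext => x; rewrite /Mop mulrA. Qed.

Lemma Mop1 (g : V) : Mop (fun=> 1) g = g.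
Proof. by apply: funext => x; rewrite /Mop mul1r. Qed.

Lemma mult_ball_nsq psi g : mult_ball H ip psi -> H g -> nsq (Mop psi g) <= nsq g.
Proof.
move=> [mpsi bpsi] hg; have := bpsi g hg.
by rewrite /hnorm ler_sqrt ?nsq_ge0 //; apply: mpsi.
Qed.

Lemma mult_ball1 : mult_ball H ip (fun=> 1).
Proof. by split=> g hg; rewrite Mop1. Qed.

Lemma mult_ballM a b : mult_ball H ip a -> mult_ball H ip b ->
  mult_ball H ip (fun x => a x * b x).
Proof.
move=> [ma ba] [mb bb]; split=> g hg; rewrite MopM; first by apply/ma/mb.
exact: le_trans (ba _ (mb _ hg)) (bb _ hg).
Qed.

Lemma nsq_Qop_le psi B a : mult_ball H ip psi -> is_adjoint H ip (Mop psi) B -> H a ->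
  nsq (Qop psi B a) <= nsq a - nsq (B a).
Proof.
move=> bpsi [hB aB] ha; have hBa := hB _ ha; have hpBa := bpsi.1 _ hBa.
rewrite /Qop nsqB // (ipC hH) // aB // ReJ.
by have := mult_ball_nsq bpsi hBa; rewrite /nsq; lra.
Qed.

Lemma MMadj_sym psi B f g : multiplier H psi -> is_adjoint H ip (Mop psi) B ->
  H f -> H g -> ip (Mop psi (B f)) g = ip f (Mop psi (B g)).
Proof.
move=> mpsi [hB aB] hf hg; have hBf := hB _ hf; have hBg := hB _ hg.
by rewrite aB // (ipC hH (mpsi _ hBg) hf) aB // (ipC hH hBg hBf).
Qed.

Lemma adjoint_kernel psi B y k : multiplier H psi -> is_adjoint H ip (Mop psi) B ->
  H k -> (forall g, H g -> g y = ip g k) -> B k = fscale (psi y)^* k.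
Proof.
move=> mpsi [hB aB] hk k_rep; have hBk := hB _ hk.
have hpk : H (fscale (psi y)^* k) by apply: HZ.
set d := fsub (B k) (fscale (psi y)^* k).
have hd : H d by apply: HB.
have d_orth g : H g -> ip g d = 0.
  move=> hg; rewrite ipBr // -aB // -(k_rep _ (mpsi _ hg)) ipZr // conjCK.
  by rewrite -(k_rep _ hg) /Mop subrr.
by apply/fsub_eq0/(nsq_eq0 hd); rewrite /nsq d_orth.
Qed.
End InnerProductSpace.

Section ProductExpansion.
Variables (R : realType) (X : Type) (H : set (X -> R[i])).
Variable ip : (X -> R[i]) -> (X -> R[i]) -> R[i].
Variables (phi : nat -> (X -> R[i])) (Phi : X -> R[i]).
Variables (Mstar_phi Mstar_Phi_n : nat -> (X -> R[i]) -> (X -> R[i])).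
Variable Mstar_Phi : (X -> R[i]) -> (X -> R[i]).
Hypothesis hH : is_RKHS H ip.
Hypothesis phi_ball : forall n, (1 <= n)%N -> mult_ball H ip (phi n).
Hypothesis Phi_mult : multiplier H Phi.
Hypothesis Phi_prod_cvg : forall x, ccvg (fun n => Phi_prod phi n x) (Phi x).
Hypothesis phi_adj : forall n, (1 <= n)%N -> is_adjoint H ip (Mop (phi n)) (Mstar_phi n).
Hypothesis Phi_prod_adj : forall n, is_adjoint H ip (Mop (Phi_prod phi n)) (Mstar_Phi_n n).
Hypothesis Phi_adj : is_adjoint H ip (Mop Phi) Mstar_Phi.
Local Notation V := (X -> R[i]).
Local Notation Phi_ := (Phi_prod phi).
Local Notation nsq := (nsq ip).
Local Notation hcvg := (hcvg ip).

Definition phi_seg n k : V := fun x => \prod_(n.+1 <= j < (n + k).+1) phi j x.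

Lemma Phi_prod0 : Phi_ 0 = fun=> 1.
Proof. by apply: funext => x; rewrite /Phi_prod big_geq. Qed.

Lemma Phi_prodS n : Phi_ n.+1 = fun x => Phi_ n x * phi n.+1 x.
Proof. by apply: funext => x; rewrite /Phi_prod big_nat_recr. Qed.

Lemma Phi_prodD n k : Phi_ (n + k) = fun x => Phi_ n x * phi_seg n k x.
Proof.
by apply: funext => x; rewrite /Phi_prod /phi_seg (@big_cat_nat _ _ _ n.+1) // ltnS leq_addr.
Qed.

Lemma phi_seg_ball_adj n k :
  mult_ball H ip (phi_seg n k) /\ exists B, is_adjoint H ip (Mop (phi_seg n k)) B.
Proof.
elim: k => [|k [ball_k [B adj_k]]].
  have -> : phi_seg n 0 = fun=> 1 by apply: funext => x; rewrite /phi_seg addn0 big_geq.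
  split; first exact: mult_ball1.
  by exists id; split=> // f g hf hg; rewrite Mop1.
have -> : phi_seg n k.+1 = fun x => phi_seg n k x * phi (n + k).+1 x.
  by apply: funext => x; rewrite /phi_seg addnS big_nat_recr //= ltnS leq_addr.
have ball_S := phi_ball (ltn0Sn (n + k)).
split; first exact: mult_ballM.
exists (fun g => Mstar_phi (n + k).+1 (B g)).
rewrite MopM.
exact: adjoint_comp adj_k (phi_adj (ltn0Sn _)) ball_S.1.
Qed.


Lemma Phi_prod_ball n : mult_ball H ip (Phi_ n).
Proof.
have -> : Phi_ n = phi_seg 0 n by apply: funext => x; rewrite /phi_seg add0n.
exact: (phi_seg_ball_adj 0 n).1.
Qed.

Lemma Mstar_Phi_n0 g : H g -> Mstar_Phi_n 0 g = g.
Proof.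
move=> hg; apply: (adjoint_unique hH (Phi_prod_adj 0) (B2 := id) _ hg).
by rewrite Phi_prod0; split=> // f k hf hk; rewrite Mop1.
Qed.

Lemma Mstar_Phi_nS n g : H g -> Mstar_Phi_n n.+1 g = Mstar_phi n.+1 (Mstar_Phi_n n g).
Proof.
move=> hg; apply: (adjoint_unique hH (Phi_prod_adj n.+1)
  (B2 := fun g => Mstar_phi n.+1 (Mstar_Phi_n n g)) _ hg).
rewrite Phi_prodS MopM.
exact: adjoint_comp (Phi_prod_adj n) (phi_adj (ltn0Sn n)) (phi_ball (ltn0Sn n)).1.
Qed.

Lemma Mstar_Phi_nD n k : exists2 B, is_adjoint H ip (Mop (phi_seg n k)) B &
  forall g, H g -> Mstar_Phi_n (n + k) g = B (Mstar_Phi_n n g).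
Proof.
have [[m_seg _] [B adj_seg]] := phi_seg_ball_adj n k.
exists B => // g hg; apply: (adjoint_unique hH (Phi_prod_adj (n + k))
  (B2 := fun g => B (Mstar_Phi_n n g)) _ hg).
by rewrite Phi_prodD MopM; apply: adjoint_comp (Phi_prod_adj n) adj_seg m_seg.
Qed.

Definition PPhi n g : V := Mop (Phi_ n) (Mstar_Phi_n n g).

Lemma PPhi_H n g : H g -> H (PPhi n g).
Proof. by move=> hg; apply/(Phi_prod_ball n).1/(Phi_prod_adj n).1. Qed.

Lemma nsq_PPhi_sub_le n k g : H g ->
  nsq (fsub (PPhi n g) (PPhi (n + k) g))
    <= nsq (Mstar_Phi_n n g) - nsq (Mstar_Phi_n (n + k) g).
Proof.
move=> hg; have [B adj_seg aD] := Mstar_Phi_nD n k.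
have ball_seg := (phi_seg_ball_adj n k).1.
have ha := (Phi_prod_adj n).1 _ hg.
have -> : fsub (PPhi n g) (PPhi (n + k) g)
    = Mop (Phi_ n) (Qop (phi_seg n k) B (Mstar_Phi_n n g)).
  by apply: funext => x; rewrite /PPhi /Qop /fsub /Mop aD // Phi_prodD; ring.
rewrite aD //; apply: le_trans (nsq_Qop_le hH ball_seg adj_seg ha).
apply: (mult_ball_nsq hH (Phi_prod_ball n)).
by apply: (HB hH) => //; apply: ball_seg.1; apply: adj_seg.1.
Qed.

Lemma PPhi_cauchy g : H g -> exists L, H L /\ hcvg (PPhi^~ g) L.
Proof.
move=> hg; pose s n := nsq (Mstar_Phi_n n g).
have s_ge0 n : 0 <= s n by apply/(nsq_ge0 hH)/(Phi_prod_adj n).1.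
have dist_le n k : nsq (fsub (PPhi n g) (PPhi (n + k) g)) <= s n - s (n + k)%N.
  exact: nsq_PPhi_sub_le.
have s_dec n m : (n <= m)%N -> s m <= s n.
  move/subnKC <-; have := dist_le n (m - n)%N.
  by have := nsq_ge0 hH (HB hH (PPhi_H n hg) (PPhi_H (n + (m - n)) hg)); lra.
pose S := [set s n | n in [set: nat]].
have hinf : has_inf S by split; [exists (s 0%N), 0%N|exists 0 => _ [n _ <-]].
apply: (hcvg_cauchy hH (fun n => PPhi_H n hg)) => e e0.
have [_ [N _ <-] sN] := inf_adherent (exprn_gt0 2 e0) hinf.
have tail_le p q : (N <= p)%N -> (p <= q)%N -> nsq (fsub (PPhi p g) (PPhi q g)) < e ^+ 2.
  move=> Np /subnKC <-; have := dist_le p (q - p)%N; have := s_dec _ _ Np.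
  have : inf S <= s (p + (q - p))%N by apply: (ge_inf hinf.2); exists (p + (q - p))%N.
  lra.
exists N => m n Nm Nn.
apply: hnorm_lt => //.
case: (leqP m n) => [mn|/ltnW nm]; first exact: tail_le Nm mn.
by rewrite (nsq_distC hH (PPhi_H m hg) (PPhi_H n hg)); apply: tail_le Nn nm.
Qed.


Lemma PPhi_kernel_cvg y k : H k -> (forall g, H g -> g y = ip g k) ->
  hcvg (PPhi^~ k) (Mop Phi (Mstar_Phi k)).
Proof.
move=> hk k_rep; have [K [hK cK]] := PPhi_cauchy hk.
suff <- : K = Mop Phi (Mstar_Phi k) by [].
apply: (hcvg_eq_pointwise hH (fun n => PPhi_H n hk) hK cK) => x.
have -> : (fun n => PPhi n k x) = fun n => Phi_ n x * ((Phi_ n y)^* * k x).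
  apply: funext => n.
  by rewrite /PPhi (adjoint_kernel hH (Phi_prod_ball n).1 (Phi_prod_adj n) hk k_rep).
rewrite /Mop (adjoint_kernel hH Phi_mult Phi_adj hk k_rep) /fscale.
exact: ccvgM (Phi_prod_cvg x) (ccvgM (ccvgJ (Phi_prod_cvg y)) (ccvg_cst _)).
Qed.

Lemma PPhi_cvg f : H f -> hcvg (PPhi^~ f) (Mop Phi (Mstar_Phi f)).
Proof.
move=> hf; have [L [hL cL]] := PPhi_cauchy hf.
suff <- : L = Mop Phi (Mstar_Phi f) by [].
apply: (hcvg_eq_pointwise hH (fun n => PPhi_H n hf) hL cL) => y.
have [k hk k_rep] := exists_kernel hH y.
have -> : (fun n => PPhi n f y) = fun n => ip f (PPhi n k).
  apply: funext => n; rewrite k_rep; last exact: PPhi_H.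
  exact: (MMadj_sym hH (Phi_prod_ball n).1 (Phi_prod_adj n) hf hk).
have hPk : H (Mop Phi (Mstar_Phi k)) by apply/Phi_mult/Phi_adj.1.
rewrite k_rep; last by apply/Phi_mult/(Phi_adj.1 _ hf).
rewrite (MMadj_sym hH Phi_mult Phi_adj hf hk).
exact: (hcvg_ipr hH hf (fun n => PPhi_H n hk) hPk (PPhi_kernel_cvg hk k_rep)).
Qed.

Lemma PPhi_telescope f N x : H f ->
  \sum_(1 <= n < N.+1) Mop (Phi_ n.-1) (Qop (phi n) (Mstar_phi n) (Mstar_Phi_n n.-1 f)) x
    = f x - PPhi N f x.
Proof.
move=> hf; elim: N => [|N IH].
  by rewrite big_geq // /PPhi Mstar_Phi_n0 // Phi_prod0 /Mop mul1r subrr.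
rewrite big_nat_recr //= IH /PPhi /Qop /fsub /Mop -Mstar_Phi_nS // Phi_prodS; ring.
Qed.

End ProductExpansion.

Theorem theorem2p2 (R : realType) (X : Type)
  (H : set (X -> R[i])) (ip : (X -> R[i]) -> (X -> R[i]) -> R[i])
  (phi : nat -> (X -> R[i])) (Phi : X -> R[i])
  (Mstar_phi : nat -> (X -> R[i]) -> (X -> R[i]))
  (Mstar_Phi_n : nat -> (X -> R[i]) -> (X -> R[i]))
  (Mstar_Phi : (X -> R[i]) -> (X -> R[i])) :
  is_RKHS H ip ->
  (forall n, (1 <= n)%N -> mult_ball H ip (phi n)) ->
  multiplier H Phi ->
  (forall x : X, forall e : R, 0 < e -> exists N, forall n, (N <= n)%N ->
      cabs (Phi_prod phi n x - Phi x) < e) ->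
  (forall n, (1 <= n)%N -> is_adjoint H ip (Mop (phi n)) (Mstar_phi n)) ->
  (forall n, is_adjoint H ip (Mop (Phi_prod phi n)) (Mstar_Phi_n n)) ->
  is_adjoint H ip (Mop Phi) Mstar_Phi ->
  forall f, H f ->
    (fun N : nat => hnorm ip
       (fsub f (fun x => Mop Phi (Mstar_Phi f) x +
          \sum_(1 <= n < N.+1)
             Mop (Phi_prod phi n.-1)
               (Qop (phi n) (Mstar_phi n) (Mstar_Phi_n n.-1 f)) x)))
      @ \oo --> (0 : R).
Proof.
move=> hH phi_ball Phi_mult Phi_prod_cvg phi_adj Phi_prod_adj Phi_adj f hf.
have partial_sum N : fsub f (fun x => Mop Phi (Mstar_Phi f) x +
    \sum_(1 <= n < N.+1) Mop (Phi_prod phi n.-1)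
      (Qop (phi n) (Mstar_phi n) (Mstar_Phi_n n.-1 f)) x)
    = fsub (PPhi phi Mstar_Phi_n N f) (Mop Phi (Mstar_Phi f)).
  by apply: funext => x; rewrite /fsub (PPhi_telescope hH phi_ball phi_adj Phi_prod_adj) //; ring.
under eq_fun do rewrite partial_sum.
apply/hcvgP.
exact: (PPhi_cvg hH phi_ball Phi_mult Phi_prod_cvg phi_adj Phi_prod_adj Phi_adj hf).
Qed.
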